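(* Let $T^2=\mathbb R^2/\mathbb Z^2$ and let $f\colon T^2\to T^2$ be $f([x])=[Ax]$ with $A=\begin{pmatrix}2&1\\1&1\end{pmatrix}$. Let $K\subseteq T^2$ be the orbit of a periodic point of $f$. Then $K$ is dynamically isolated for $f$, and the restriction of $f$ to $T^2\setminus K$ is metric-independent expansive.
   Context: A set $K$ invariant under a homeomorphism $f$ is dynamically isolated if there exists an open set $U\supseteq K$ with $\bigcap_{n\in\mathbb Z}f^n(U)=K$. A homeomorphism of a metrizable space is metric-independent expansive if for every compatible metric $\rho$ there is $c>0$ such that for all $x\neq y$ there exists $n\in\mathbb Z$ with $\rho(f^n(x),f^n(y))>c$. *)

From Stdlib Require Import Reals Lra ZArith.
Open Scope R_scope.

(** The 2-torus T^2 = R^2/Z^2, represented by the canonical representatives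
    in the fundamental domain [0,1)^2. *)
Definition T2 : Type :=
  {p : R * R | (0 <= fst p < 1) /\ (0 <= snd p < 1)}.

Definition pt (x : T2) : R * R := proj1_sig x.

Lemma frac_part_bounds (r : R) : 0 <= frac_part r < 1.
Proof.
  unfold frac_part. destruct (base_Int_part r) as [H1 H2]. lra.
Qed.

Definition proj (p : R * R) : T2 :=
  exist _ (frac_part (fst p), frac_part (snd p))
    (conj (frac_part_bounds (fst p)) (frac_part_bounds (snd p))).

Definition catA (p : R * R) : R * R :=
  (2 * fst p + snd p, fst p + snd p).
Definition catAinv (p : R * R) : R * R :=
  (fst p - snd p, - fst p + 2 * snd p).

Definition cat (x : T2) : T2 := proj (catA (pt x)).
Definition cat_inv (x : T2) : T2 := proj (catAinv (pt x)).

Definition cat_iter (n : Z) (x : T2) : T2 :=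
  match n with
  | Z0 => x
  | Zpos k => Nat.iter (Pos.to_nat k) cat x
  | Zneg k => Nat.iter (Pos.to_nat k) cat_inv x
  end.

Definition openR2 (U : R * R -> Prop) : Prop :=
  forall p, U p -> exists e, 0 < e /\
    forall q, Rabs (fst q - fst p) < e -> Rabs (snd q - snd p) < e -> U q.

Definition openT2 (U : T2 -> Prop) : Prop := openR2 (fun p => U (proj p)).

Definition periodic_point (x : T2) : Prop :=
  exists n : nat, (0 < n)%nat /\ Nat.iter n cat x = x.

Definition orbit (x : T2) : T2 -> Prop :=
  fun y => exists n : Z, y = cat_iter n x.

Definition image_iter (n : Z) (U : T2 -> Prop) : T2 -> Prop :=
  fun y => exists z, U z /\ y = cat_iter n z.

Definition dyn_isolated (K : T2 -> Prop) : Prop :=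
  exists U : T2 -> Prop, openT2 U /\ (forall y, K y -> U y) /\
    (forall y, (forall n : Z, image_iter n U y) <-> K y).

(** rho is a metric on the subspace X of T^2 (only its values on X matter). *)
Definition metric_on (X : T2 -> Prop) (rho : T2 -> T2 -> R) : Prop :=
  (forall x y, X x -> X y -> 0 <= rho x y) /\
  (forall x y, X x -> X y -> (rho x y = 0 <-> x = y)) /\
  (forall x y, X x -> X y -> rho x y = rho y x) /\
  (forall x y z, X x -> X y -> X z -> rho x z <= rho x y + rho y z).

Definition compatible_metric (X : T2 -> Prop) (rho : T2 -> T2 -> R) : Prop :=
  metric_on X rho /\
  forall V : T2 -> Prop, (forall x, V x -> X x) ->
    ((exists U, openT2 U /\ forall x, X x -> (V x <-> U x)) <->
     (forall x, V x -> exists e, 0 < e /\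
        forall y, X y -> rho x y < e -> V y)).

Definition mi_expansive_on (X : T2 -> Prop) : Prop :=
  forall rho, compatible_metric X rho ->
    exists c, 0 < c /\
      forall x y, X x -> X y -> x <> y ->
        exists n : Z, rho (cat_iter n x) (cat_iter n y) > c.

From Stdlib Require Import Reals Lra Lia ZArith List Classical ProofIrrelevance ClassicalEpsilon.
From Coquelicot Require Compactness.
Open Scope R_scope.

(* The map is expansive for the flat metric [dT] with constant 1/8: the difference of
   two orbits that stay 1/8-close lifts to a vector of R^2 evolving under A, and its
   coordinates along the two eigenlines of A grow geometrically, forward or backward.
   A periodic orbit K is finite, hence separated, so a point whose whole orbit stays in a
   small neighbourhood of K shadows a single point of K and therefore lies in K; this is
   the isolation.  For a compatible metric rho on T^2 \ K, compactness of the complement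
   of that neighbourhood makes rho-closeness force dT-closeness there.  Two orbits that
   stay rho-close must leave the neighbourhood (they avoid K), and until they do they
   shadow the same point of K; so they stay dT-close at all times and coincide. *)

Lemma Rabs_lt_iff t e : Rabs t < e <-> -e < t < e.
Proof. unfold Rabs; destruct (Rcase_abs t); split; intros; lra. Qed.

Lemma Rabs_le_iff t e : Rabs t <= e <-> -e <= t <= e.
Proof. unfold Rabs; destruct (Rcase_abs t); split; intros; lra. Qed.

Lemma IZR_eq_0 (k : Z) : -1 < IZR k < 1 -> k = 0%Z.
Proof. intros [H1 H2]; apply lt_IZR in H1; apply lt_IZR in H2; lia. Qed.

Definition vsub (p q : R * R) : R * R := (fst p - fst q, snd p - snd q).

Definition supnorm (v : R * R) : R := Rmax (Rabs (fst v)) (Rabs (snd v)).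

Definition integral (v : R * R) : Prop :=
  exists k1 k2 : Z, fst v = IZR k1 /\ snd v = IZR k2.

Ltac vec_eq := apply injective_projections; cbn [fst snd vsub catA catAinv]; ring.

Lemma supnorm_bounds v :
  -supnorm v <= fst v <= supnorm v /\ -supnorm v <= snd v <= supnorm v.
Proof. unfold supnorm; split; apply Rabs_le_iff; [apply Rmax_l | apply Rmax_r]. Qed.

Lemma supnorm_nonneg v : 0 <= supnorm v.
Proof. unfold supnorm; eapply Rle_trans; [apply Rabs_pos | apply Rmax_l]. Qed.

Lemma supnorm_le v e : -e <= fst v <= e -> -e <= snd v <= e -> supnorm v <= e.
Proof. intros; apply Rmax_lub; apply Rabs_le_iff; assumption. Qed.

Lemma integral_vsub u v : integral u -> integral v -> integral (vsub u v).
Proof.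
  intros [a1 [a2 [A1 A2]]] [b1 [b2 [B1 B2]]].
  exists (a1 - b1)%Z, (a2 - b2)%Z; cbn; rewrite A1, A2, B1, B2, !minus_IZR; auto.
Qed.

Lemma integral_vsub_sym p q : integral (vsub p q) -> integral (vsub q p).
Proof.
  intros [k1 [k2 [H1 H2]]]; exists (- k1)%Z, (- k2)%Z.
  cbn in *; rewrite !opp_IZR; lra.
Qed.

Lemma integral_catA v : integral v -> integral (catA v).
Proof.
  intros [k1 [k2 [H1 H2]]]; exists (2 * k1 + k2)%Z, (k1 + k2)%Z.
  cbn [fst snd catA]; rewrite H1, H2, !plus_IZR, mult_IZR; auto.
Qed.

Lemma integral_catAinv v : integral v -> integral (catAinv v).
Proof.
  intros [k1 [k2 [H1 H2]]]; exists (k1 - k2)%Z, (- k1 + 2 * k2)%Z.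
  cbn [fst snd catAinv]; rewrite H1, H2, plus_IZR, minus_IZR, mult_IZR, opp_IZR; auto.
Qed.

Lemma integral_small v : integral v -> supnorm v < 1 -> v = (0, 0).
Proof.
  intros [k1 [k2 [H1 H2]]] Hv; destruct (supnorm_bounds v) as [B1 B2].
  assert (k1 = 0%Z) by (apply IZR_eq_0; lra).
  assert (k2 = 0%Z) by (apply IZR_eq_0; lra).
  subst; destruct v; cbn in *; subst; reflexivity.
Qed.

Lemma catA_vsub p q : catA (vsub p q) = vsub (catA p) (catA q).
Proof. vec_eq. Qed.

Lemma catAinv_vsub p q : catAinv (vsub p q) = vsub (catAinv p) (catAinv q).
Proof. vec_eq. Qed.

Lemma catA_catAinv p : catA (catAinv p) = p.
Proof. vec_eq. Qed.

Lemma catAinv_catA p : catAinv (catA p) = p.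
Proof. vec_eq. Qed.

Lemma supnorm_catA v : supnorm (catA v) <= 3 * supnorm v.
Proof.
  destruct (supnorm_bounds v); apply supnorm_le; cbn; lra.
Qed.

Lemma supnorm_catAinv v : supnorm (catAinv v) <= 3 * supnorm v.
Proof.
  destruct (supnorm_bounds v); apply supnorm_le; cbn; lra.
Qed.

Lemma T2_eq x y : integral (vsub (pt x) (pt y)) -> x = y.
Proof.
  intro H; destruct x as [p Hp], y as [q Hq]; cbn in *.
  assert (E : vsub p q = (0, 0)).
  { apply integral_small; auto; apply Rmax_lub_lt; apply Rabs_lt_iff; cbn; lra. }
  assert (p = q) as ->.
  { injection E; intros; apply injective_projections; lra. }
  f_equal; apply proof_irrelevance.
Qed.

Lemma integral_pt_proj p : integral (vsub p (pt (proj p))).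
Proof.
  exists (Int_part (fst p)), (Int_part (snd p)); cbn; unfold frac_part; split; ring.
Qed.

Lemma proj_eq p q : integral (vsub p q) -> proj p = proj q.
Proof.
  intro H; apply T2_eq.
  replace (vsub (pt (proj p)) (pt (proj q)))
    with (vsub (vsub p q) (vsub (vsub p (pt (proj p))) (vsub q (pt (proj q))))) by vec_eq.
  apply integral_vsub; [|apply integral_vsub]; auto using integral_pt_proj.
Qed.

Lemma proj_pt x : proj (pt x) = x.
Proof. apply T2_eq, integral_vsub_sym, integral_pt_proj. Qed.

Lemma cat_cat_inv x : cat (cat_inv x) = x.
Proof.
  unfold cat, cat_inv; rewrite <- (proj_pt x) at 2; apply proj_eq.
  rewrite <- (catA_catAinv (pt x)) at 2; rewrite <- catA_vsub.
  apply integral_catA, integral_vsub_sym, integral_pt_proj.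
Qed.

Lemma cat_inv_cat x : cat_inv (cat x) = x.
Proof.
  unfold cat, cat_inv; rewrite <- (proj_pt x) at 2; apply proj_eq.
  rewrite <- (catAinv_catA (pt x)) at 2; rewrite <- catAinv_vsub.
  apply integral_catAinv, integral_vsub_sym, integral_pt_proj.
Qed.

(* [v] is a representative in R^2 of the difference [x - y] on the torus. *)
Definition lifts_diff (x y : T2) (v : R * R) : Prop :=
  integral (vsub (vsub (pt x) (pt y)) v).

Lemma lifts_diff_shift x y v w :
  lifts_diff x y v -> integral (vsub v w) -> lifts_diff x y w.
Proof.
  unfold lifts_diff; intros Hv Hw.
  replace (vsub (vsub (pt x) (pt y)) w)
    with (vsub (vsub (vsub (pt x) (pt y)) v) (vsub (0, 0) (vsub v w))) by vec_eq.
  apply integral_vsub, integral_vsub; auto; exists 0%Z, 0%Z; auto.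
Qed.

Lemma lifts_diff_proj p q : lifts_diff (proj p) (proj q) (vsub p q).
Proof.
  unfold lifts_diff.
  replace (vsub (vsub (pt (proj p)) (pt (proj q))) (vsub p q))
    with (vsub (vsub q (pt (proj q))) (vsub p (pt (proj p)))) by vec_eq.
  apply integral_vsub; apply integral_pt_proj.
Qed.

Lemma lifts_diff_refl x : lifts_diff x x (0, 0).
Proof. exists 0%Z, 0%Z; cbn; split; ring. Qed.

Lemma lifts_diff_sym x y v : lifts_diff x y v -> lifts_diff y x (vsub (0, 0) v).
Proof.
  intros [k1 [k2 [H1 H2]]]; exists (- k1)%Z, (- k2)%Z.
  cbn in *; rewrite !opp_IZR; lra.
Qed.

Lemma lifts_diff_trans x y z v w :
  lifts_diff x y v -> lifts_diff y z w ->
  lifts_diff x z (fst v + fst w, snd v + snd w).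
Proof.
  intros [a1 [a2 [A1 A2]]] [b1 [b2 [B1 B2]]]; exists (a1 + b1)%Z, (a2 + b2)%Z.
  cbn in *; rewrite !plus_IZR; lra.
Qed.

Lemma lifts_diff_eq x y : lifts_diff x y (0, 0) -> x = y.
Proof.
  intro H; apply T2_eq.
  replace (vsub (pt x) (pt y)) with (vsub (vsub (pt x) (pt y)) (0, 0)) by vec_eq.
  exact H.
Qed.

Lemma lifts_diff_unique x y v w :
  lifts_diff x y v -> lifts_diff x y w -> supnorm v < 1/2 -> supnorm w < 1/2 -> v = w.
Proof.
  intros Hv Hw Sv Sw.
  assert (E : vsub v w = (0, 0)).
  { apply integral_small.
    - replace (vsub v w)
        with (vsub (vsub (vsub (pt x) (pt y)) w) (vsub (vsub (pt x) (pt y)) v)) by vec_eq.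
      apply integral_vsub; assumption.
    - destruct (supnorm_bounds v), (supnorm_bounds w).
      apply Rmax_lub_lt; apply Rabs_lt_iff; cbn; lra. }
  injection E; intros; apply injective_projections; lra.
Qed.

Lemma lifts_diff_cat x y v : lifts_diff x y v -> lifts_diff (cat x) (cat y) (catA v).
Proof.
  intro H; eapply lifts_diff_shift; [apply lifts_diff_proj|].
  rewrite <- !catA_vsub; apply integral_catA; exact H.
Qed.

Lemma lifts_diff_cat_inv x y v :
  lifts_diff x y v -> lifts_diff (cat_inv x) (cat_inv y) (catAinv v).
Proof.
  intro H; eapply lifts_diff_shift; [apply lifts_diff_proj|].
  rewrite <- !catAinv_vsub; apply integral_catAinv; exact H.
Qed.

(* Distance in R/Z, valid for representatives in [0,1). *)
Definition dist_circle (a b : R) : R := Rmin (Rabs (a - b)) (1 - Rabs (a - b)).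

Definition dT (x y : T2) : R :=
  Rmax (dist_circle (fst (pt x)) (fst (pt y))) (dist_circle (snd (pt x)) (snd (pt y))).

Lemma dist_circle_le a b (k : Z) :
  0 <= a < 1 -> 0 <= b < 1 -> dist_circle a b <= Rabs (a - b - IZR k).
Proof.
  intros Ha Hb; unfold dist_circle.
  destruct (Z.eq_dec k 0) as [->|Hk].
  - rewrite Rminus_0_r; apply Rmin_l.
  - eapply Rle_trans; [apply Rmin_r|].
    destruct (Z_lt_le_dec k 0) as [Hl|Hl].
    + assert (IZR k <= -1) by (apply IZR_le; lia).
      unfold Rabs; destruct (Rcase_abs (a - b)), (Rcase_abs (a - b - IZR k)); lra.
    + assert (1 <= IZR k) by (apply IZR_le; lia).
      unfold Rabs; destruct (Rcase_abs (a - b)), (Rcase_abs (a - b - IZR k)); lra.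
Qed.

Lemma dist_circle_attained a b :
  0 <= a < 1 -> 0 <= b < 1 -> exists k : Z, dist_circle a b = Rabs (a - b - IZR k).
Proof.
  intros Ha Hb; unfold dist_circle, Rmin.
  destruct (Rle_dec (Rabs (a - b)) (1 - Rabs (a - b))).
  - exists 0%Z; rewrite Rminus_0_r; reflexivity.
  - destruct (Rle_dec 0 (a - b)).
    + exists 1%Z; rewrite Rabs_right in * by lra; rewrite Rabs_left by lra; lra.
    + exists (-1)%Z; rewrite Rabs_left in * by lra; rewrite Rabs_right by lra; lra.
Qed.

Lemma dT_le_supnorm x y v : lifts_diff x y v -> dT x y <= supnorm v.
Proof.
  intros [k1 [k2 [H1 H2]]]; destruct (proj2_sig x), (proj2_sig y).
  cbn in H1, H2; apply Rmax_lub.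
  - eapply Rle_trans; [|apply Rmax_l].
    replace (fst v) with (fst (pt x) - fst (pt y) - IZR k1) by lra.
    apply dist_circle_le; auto.
  - eapply Rle_trans; [|apply Rmax_r].
    replace (snd v) with (snd (pt x) - snd (pt y) - IZR k2) by lra.
    apply dist_circle_le; auto.
Qed.

Lemma dT_lift x y : exists v, lifts_diff x y v /\ supnorm v = dT x y.
Proof.
  destruct (proj2_sig x), (proj2_sig y).
  destruct (dist_circle_attained (fst (pt x)) (fst (pt y))) as [k1 E1]; auto.
  destruct (dist_circle_attained (snd (pt x)) (snd (pt y))) as [k2 E2]; auto.
  exists (fst (pt x) - fst (pt y) - IZR k1, snd (pt x) - snd (pt y) - IZR k2); split.
  - exists k1, k2; cbn; split; ring.
  - unfold dT, supnorm; rewrite E1, E2; reflexivity.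
Qed.

Lemma dT_nonneg x y : 0 <= dT x y.
Proof.
  destruct (dT_lift x y) as [v [_ <-]]; apply supnorm_nonneg.
Qed.

Lemma dT_refl x : dT x x = 0.
Proof.
  apply Rle_antisym; [|apply dT_nonneg].
  eapply Rle_trans; [apply dT_le_supnorm, lifts_diff_refl|].
  unfold supnorm; cbn; rewrite Rabs_R0, Rmax_left; lra.
Qed.

Lemma dT_sym x y : dT x y = dT y x.
Proof.
  assert (H : forall x y, dT y x <= dT x y).
  { intros a b; destruct (dT_lift a b) as [v [Hv <-]].
    eapply Rle_trans; [apply dT_le_supnorm, lifts_diff_sym, Hv|].
    unfold supnorm; cbn; rewrite !Rminus_0_l, !Rabs_Ropp; lra. }
  apply Rle_antisym; apply H.
Qed.

Lemma dT_triangle x y z : dT x z <= dT x y + dT y z.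
Proof.
  destruct (dT_lift x y) as [v [Hv <-]], (dT_lift y z) as [w [Hw <-]].
  eapply Rle_trans; [apply dT_le_supnorm, (lifts_diff_trans _ _ _ _ _ Hv Hw)|].
  destruct (supnorm_bounds v), (supnorm_bounds w); apply supnorm_le; cbn; lra.
Qed.

Lemma dT_eq0 x y : dT x y = 0 -> x = y.
Proof.
  intro H; destruct (dT_lift x y) as [v [Hv Ev]]; rewrite H in Ev.
  apply lifts_diff_eq; replace (0, 0) with v; auto.
  destruct (supnorm_bounds v); apply injective_projections; cbn; lra.
Qed.

Lemma dT_pos x y : x <> y -> 0 < dT x y.
Proof.
  intro Hxy; destruct (Rle_lt_or_eq_dec _ _ (dT_nonneg x y)) as [|E]; auto.
  exfalso; apply Hxy, dT_eq0; auto.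
Qed.

Lemma dT_proj_le p q : dT (proj p) (proj q) <= supnorm (vsub p q).
Proof. apply dT_le_supnorm, lifts_diff_proj. Qed.

Lemma dT_cat_le x y : dT (cat x) (cat y) <= 3 * dT x y.
Proof.
  destruct (dT_lift x y) as [v [Hv <-]].
  eapply Rle_trans; [apply dT_le_supnorm, lifts_diff_cat, Hv | apply supnorm_catA].
Qed.

Lemma dT_cat_inv_le x y : dT (cat_inv x) (cat_inv y) <= 3 * dT x y.
Proof.
  destruct (dT_lift x y) as [v [Hv <-]].
  eapply Rle_trans; [apply dT_le_supnorm, lifts_diff_cat_inv, Hv | apply supnorm_catAinv].
Qed.

Lemma cat_iter_succ n x : cat_iter (n + 1) x = cat (cat_iter n x).
Proof.
  destruct n as [|p|p]; cbn [cat_iter Z.add].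
  - reflexivity.
  - rewrite Pos2Nat.inj_add; cbn; rewrite Nat.add_1_r; reflexivity.
  - destruct (Pos.eq_dec p 1) as [->|Hp]; cbn.
    + symmetry; apply cat_cat_inv.
    + rewrite Z.pos_sub_lt by lia; cbn [cat_iter].
      replace (Pos.to_nat p) with (S (Pos.to_nat (p - 1))) by lia.
      cbn; symmetry; apply cat_cat_inv.
Qed.

Lemma cat_iter_pred n x : cat_iter (n - 1) x = cat_inv (cat_iter n x).
Proof.
  rewrite <- (cat_inv_cat (cat_iter (n - 1) x)), <- cat_iter_succ, Z.sub_add.
  reflexivity.
Qed.

Lemma cat_iter_add m n x : cat_iter (n + m) x = cat_iter m (cat_iter n x).
Proof.
  revert n; induction m as [|m IH|m IH] using Z.peano_ind; intro n.
  - rewrite Z.add_0_r; reflexivity.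
  - rewrite <- Z.add_1_r, Z.add_assoc, !cat_iter_succ, IH; reflexivity.
  - rewrite <- Z.sub_1_r, Z.add_sub_assoc, !cat_iter_pred, IH; reflexivity.
Qed.

Lemma cat_iter_opp_l n x : cat_iter (- n) (cat_iter n x) = x.
Proof. rewrite <- cat_iter_add, Z.add_opp_diag_r; reflexivity. Qed.

Lemma cat_iter_opp_r n x : cat_iter n (cat_iter (- n) x) = x.
Proof. rewrite <- cat_iter_add, Z.add_opp_diag_l; reflexivity. Qed.

Lemma cat_iter_of_nat m x : cat_iter (Z.of_nat m) x = Nat.iter m cat x.
Proof. destruct m; [reflexivity|]; cbn; rewrite SuccNat2Pos.id_succ; reflexivity. Qed.

Lemma cat_iter_opp_of_nat m x : cat_iter (- Z.of_nat m) x = Nat.iter m cat_inv x.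
Proof. destruct m; [reflexivity|]; cbn; rewrite SuccNat2Pos.id_succ; reflexivity. Qed.

Lemma cat_iter_ind (P : T2 -> T2 -> Prop) x y :
  (forall m, P (Nat.iter m cat x) (Nat.iter m cat y)) ->
  (forall m, P (Nat.iter m cat_inv x) (Nat.iter m cat_inv y)) ->
  forall n, P (cat_iter n x) (cat_iter n y).
Proof. intros Hf Hb [|p|p]; [exact (Hf O) | apply Hf | apply Hb]. Qed.

Section LinearLift.

Variables (F : T2 -> T2) (M : R * R -> R * R).
Hypothesis lifts_diff_F : forall x y v, lifts_diff x y v -> lifts_diff (F x) (F y) (M v).
Hypothesis supnorm_M : forall v, supnorm (M v) <= 3 * supnorm v.

(* Along orbits that stay [1/8]-close, the small lift of the difference evolves by
   the linear map [M]: [M v] is a lift of norm [< 1/2], hence the shortest one. *)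
Lemma lifts_diff_iter x y v :
  lifts_diff x y v -> supnorm v < 1/8 ->
  (forall m, dT (Nat.iter m F x) (Nat.iter m F y) < 1/8) ->
  forall m, lifts_diff (Nat.iter m F x) (Nat.iter m F y) (Nat.iter m M v) /\
            supnorm (Nat.iter m M v) < 1/8.
Proof.
  intros Hv Sv Hclose m; induction m as [|m [Hm Sm]]; [split; assumption|].
  rewrite !Nat.iter_succ.
  destruct (dT_lift (F (Nat.iter m F x)) (F (Nat.iter m F y))) as [u [Hu Su]].
  assert (Hclose' := Hclose (S m)); rewrite !Nat.iter_succ, <- Su in Hclose'.
  assert (Sw := supnorm_M (Nat.iter m M v)).
  assert (E : M (Nat.iter m M v) = u).
  { apply (lifts_diff_unique _ _ _ _ (lifts_diff_F _ _ _ Hm) Hu); lra. }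
  rewrite E; split; assumption.
Qed.

End LinearLift.

Definition golden : R := (1 + sqrt 5) / 2.

(* Coordinates along the eigenlines of [A]: the eigenvalue of [A] on the unstable line,
   and of [A^-1] on the stable line, is [golden^2 = (3 + sqrt 5) / 2]. *)
Definition unstable_coord (v : R * R) : R := fst v + (golden - 1) * snd v.
Definition stable_coord (v : R * R) : R := fst v - golden * snd v.

Lemma golden_sq : golden * golden = golden + 1.
Proof.
  unfold golden; assert (E : sqrt 5 * sqrt 5 = 5) by (apply sqrt_sqrt; lra); nra.
Qed.

Lemma golden_bounds : 3/2 < golden < 2.
Proof.
  assert (E := golden_sq); unfold golden in *.
  assert (0 <= sqrt 5) by apply sqrt_pos; split; nra.
Qed.

Lemma unstable_coord_catA v :
  unstable_coord (catA v) = golden * golden * unstable_coord v.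
Proof.
  rewrite golden_sq; unfold unstable_coord; destruct v as [a b]; cbn.
  replace ((golden + 1) * (a + (golden - 1) * b))
    with ((golden + 1) * a + (golden * golden - 1) * b) by ring.
  rewrite golden_sq; ring.
Qed.

Lemma stable_coord_catAinv v :
  stable_coord (catAinv v) = golden * golden * stable_coord v.
Proof.
  rewrite golden_sq; unfold stable_coord; destruct v as [a b]; cbn.
  replace ((golden + 1) * (a - golden * b))
    with ((golden + 1) * a - (golden * golden + golden) * b) by ring.
  rewrite golden_sq; ring.
Qed.

Lemma geometric_bounded_eq0 (lam c B : R) :
  1 < lam -> (forall m, Rabs (lam ^ m * c) <= B) -> c = 0.
Proof.
  intros Hlam Hb; apply NNPP; intro Hc.
  assert (Hc' : 0 < Rabs c) by (apply Rabs_pos_lt; auto).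
  destruct (Pow_x_infinity lam) with (b := (B + 1) / Rabs c) as [N HN].
  { rewrite Rabs_right; lra. }
  assert (H1 := HN N (le_n N)); assert (H2 := Hb N).
  rewrite Rabs_mult in H2.
  apply Rge_le in H1; apply (Rmult_le_compat_r (Rabs c)) in H1; [|lra].
  unfold Rdiv in H1; rewrite Rmult_assoc, Rinv_l in H1 by lra; lra.
Qed.

Lemma bounded_orbit_catA_eq0 v :
  (forall m, supnorm (Nat.iter m catA v) <= 1) ->
  (forall m, supnorm (Nat.iter m catAinv v) <= 1) -> v = (0, 0).
Proof.
  intros Hf Hb; destruct golden_bounds as [G1 G2].
  assert (Hlam : 1 < golden * golden) by nra.
  assert (U : unstable_coord v = 0).
  { apply (geometric_bounded_eq0 _ _ 2 Hlam); intro m.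
    replace ((golden * golden) ^ m * unstable_coord v)
      with (unstable_coord (Nat.iter m catA v)).
    - destruct (supnorm_bounds (Nat.iter m catA v)); assert (Hm := Hf m).
      unfold unstable_coord; apply Rabs_le_iff; nra.
    - induction m as [|m IH]; [cbn; ring|].
      rewrite Nat.iter_succ, unstable_coord_catA, IH; cbn [pow]; ring. }
  assert (S : stable_coord v = 0).
  { apply (geometric_bounded_eq0 _ _ 3 Hlam); intro m.
    replace ((golden * golden) ^ m * stable_coord v)
      with (stable_coord (Nat.iter m catAinv v)).
    - destruct (supnorm_bounds (Nat.iter m catAinv v)); assert (Hm := Hb m).
      unfold stable_coord; apply Rabs_le_iff; nra.
    - induction m as [|m IH]; [cbn; ring|].
      rewrite Nat.iter_succ, stable_coord_catAinv, IH; cbn [pow]; ring. }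
  unfold unstable_coord, stable_coord in *; destruct v as [a b]; cbn in *.
  assert (b = 0) by nra; subst b; f_equal; lra.
Qed.

Lemma cat_expansive x y :
  (forall n, dT (cat_iter n x) (cat_iter n y) < 1/8) -> x = y.
Proof.
  intro Hclose; destruct (dT_lift x y) as [v [Hv Sv]].
  assert (Sv' : supnorm v < 1/8) by (rewrite Sv; apply (Hclose 0%Z)).
  assert (Hf := lifts_diff_iter cat catA lifts_diff_cat supnorm_catA x y v Hv Sv').
  assert (Hb := lifts_diff_iter cat_inv catAinv lifts_diff_cat_inv supnorm_catAinv x y v Hv Sv').
  apply lifts_diff_eq; replace (0, 0) with v; [assumption|].
  apply bounded_orbit_catA_eq0; intro m.
  - apply Rlt_le, Rlt_trans with (1/8); [|lra].
    apply Hf; intro k; rewrite <- !cat_iter_of_nat; apply Hclose.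
  - apply Rlt_le, Rlt_trans with (1/8); [|lra].
    apply Hb; intro k; rewrite <- !cat_iter_opp_of_nat; apply Hclose.
Qed.

Lemma list_pos_lower_bound {A : Type} (P : A -> Prop) (f : A -> R) (l : list A) :
  (forall a, In a l -> P a -> 0 < f a) ->
  exists s, 0 < s /\ forall a, In a l -> P a -> s <= f a.
Proof.
  induction l as [|b l IH]; intro Hpos.
  - exists 1; split; [lra | intros a []].
  - destruct IH as [s [Hs Hl]]; [intros a Ha; apply Hpos; right; exact Ha|].
    destruct (classic (P b)) as [Pb|NPb].
    + exists (Rmin s (f b)); split; [apply Rmin_glb_lt; auto; apply Hpos; auto; left; auto|].
      intros a [<-|Ha] Pa; [apply Rmin_r | eapply Rle_trans; [apply Rmin_l | auto]].
    + exists s; split; [exact Hs|]; intros a [<-|Ha] Pa; [contradiction | auto].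
Qed.

Lemma finite_separated (l : list T2) :
  exists s, 0 < s /\ forall p q, In p l -> In q l -> dT p q < s -> p = q.
Proof.
  destruct (list_pos_lower_bound (fun pq => fst pq <> snd pq) (fun pq => dT (fst pq) (snd pq))
              (list_prod l l)) as [s [Hs Hl]].
  { intros [p q] _; apply dT_pos. }
  exists s; split; [exact Hs|]; intros p q Hp Hq Hd.
  apply NNPP; intro Hpq; assert (H := Hl (p, q) (in_prod _ _ _ _ Hp Hq) Hpq); cbn in H; lra.
Qed.

Lemma cat_iter_periodic p x : cat_iter p x = x -> forall q, cat_iter (q * p) x = x.
Proof.
  intros Hp q; induction q as [|q IH|q IH] using Z.peano_ind; [reflexivity| |].
  - rewrite Z.mul_succ_l, cat_iter_add, IH; exact Hp.
  - rewrite Z.mul_pred_l, <- Z.add_opp_r, cat_iter_add, IH.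
    rewrite <- Hp at 1; apply cat_iter_opp_l.
Qed.

Lemma periodic_orbit_finite x0 :
  periodic_point x0 -> exists l, forall y, orbit x0 y -> In y l.
Proof.
  intros [N [HN HP]].
  exists (map (fun k => Nat.iter k cat x0) (seq 0 N)); intros y [n ->].
  assert (HNz : (0 < Z.of_nat N)%Z) by lia.
  rewrite (Z.div_mod n (Z.of_nat N)) by lia.
  rewrite cat_iter_add, (Z.mul_comm (Z.of_nat N)), cat_iter_periodic
    by (rewrite cat_iter_of_nat; exact HP).
  destruct (Z.mod_pos_bound n (Z.of_nat N) HNz) as [M1 M2].
  rewrite <- (Z2Nat.id (n mod Z.of_nat N)) by lia; rewrite cat_iter_of_nat.
  apply (in_map (fun k => Nat.iter k cat x0)), in_seq; lia.
Qed.

Lemma periodic_orbit_separated x0 :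
  periodic_point x0 ->
  exists s, 0 < s /\ forall p q, orbit x0 p -> orbit x0 q -> dT p q < s -> p = q.
Proof.
  intro Hx0; destruct (periodic_orbit_finite x0 Hx0) as [l Hl].
  destruct (finite_separated l) as [s [Hs Hsep]].
  exists s; split; auto.
Qed.

Lemma orbit_cat_iter x0 y n : orbit x0 y -> orbit x0 (cat_iter n y).
Proof. intros [m ->]; exists (m + n)%Z; symmetry; apply cat_iter_add. Qed.

Lemma not_orbit_cat_iter x0 y n : ~ orbit x0 y -> ~ orbit x0 (cat_iter n y).
Proof. intros Hy Hn; apply Hy; rewrite <- (cat_iter_opp_l n y); apply orbit_cat_iter, Hn. Qed.

Definition nbhd (K : T2 -> Prop) (d : R) (y : T2) : Prop := exists k, K k /\ dT y k < d.

Section Shadowing.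

Variables (K : T2 -> Prop) (sep d : R).
Hypothesis K_separated : forall p q, K p -> K q -> dT p q < sep -> p = q.
Hypothesis d_sep : 5 * d < sep.

Lemma shadow_unique z k1 k2 a b :
  K k1 -> K k2 -> dT z k1 < a -> dT z k2 < b -> a + b <= sep -> k1 = k2.
Proof.
  intros K1 K2 D1 D2 Hab; apply K_separated; auto.
  assert (T := dT_triangle k1 z k2); rewrite dT_sym in D1; lra.
Qed.

Section Direction.

Variables F G : T2 -> T2.
Hypothesis K_F : forall p, K p -> K (F p).
Hypothesis G_F : forall z, G (F z) = z.
Hypothesis F_lip : forall a b, dT (F a) (F b) <= 3 * dT a b.
Hypothesis G_lip : forall a b, dT (G a) (G b) <= 3 * dT a b.

Lemma shadow_forward z k :
  K k -> dT z k < d -> (forall m, nbhd K d (Nat.iter m F z)) ->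
  forall m, K (Nat.iter m F k) /\ dT (Nat.iter m F z) (Nat.iter m F k) < d.
Proof.
  intros Kk Dk Hnear m; assert (d_pos := Rle_lt_trans _ _ _ (dT_nonneg z k) Dk).
  induction m as [|m [Km Dm]]; [split; assumption|].
  rewrite !Nat.iter_succ; destruct (Hnear (S m)) as [k' [Kk' Dk']].
  rewrite Nat.iter_succ in Dk'.
  assert (E : F (Nat.iter m F k) = k').
  { apply (shadow_unique (F (Nat.iter m F z)) _ _ (3 * d) d); auto; [|lra].
    assert (L := F_lip (Nat.iter m F z) (Nat.iter m F k)); lra. }
  rewrite E; split; assumption.
Qed.

(* Two orbits that start near [K] and stay [d]-close whenever one of them is away from
   [K] shadow the same point of [K] until the first exit: one step after the exit they
   are [d]-close, and going back through [G] keeps the shadowed points equal. *)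
Lemma shadow_common j : forall x y,
  nbhd K d x -> nbhd K d y ->
  ~ nbhd K d (Nat.iter j F x) \/ ~ nbhd K d (Nat.iter j F y) ->
  (forall i, ~ nbhd K d (Nat.iter i F x) \/ ~ nbhd K d (Nat.iter i F y) ->
             dT (Nat.iter i F x) (Nat.iter i F y) < d) ->
  exists k, K k /\ dT x k < d /\ dT y k < d.
Proof.
  induction j as [|j IH]; intros x y [kx [Kx Dx]] [ky [Ky Dy]] Hexit Hout.
  { destruct Hexit as [H|H]; exfalso; apply H; eexists; eauto. }
  exists kx; split; [exact Kx|]; split; [exact Dx|].
  enough (kx = ky) by (subst; exact Dy).
  destruct (classic (nbhd K d (F x) /\ nbhd K d (F y))) as [[Nx Ny]|Hn].
  - destruct (IH (F x) (F y) Nx Ny) as [k' [Kk' [Dx' Dy']]].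
    + rewrite <- !Nat.iter_succ_r; exact Hexit.
    + intro i; rewrite <- !Nat.iter_succ_r; apply Hout.
    + assert (Ex : F kx = k').
      { apply (shadow_unique (F x) _ _ (3 * d) d); auto.
        - assert (L := F_lip x kx); lra.
        - assert (0 <= dT x kx) by apply dT_nonneg; lra. }
      assert (Ey : F ky = k').
      { apply (shadow_unique (F y) _ _ (3 * d) d); auto.
        - assert (L := F_lip y ky); lra.
        - assert (0 <= dT y ky) by apply dT_nonneg; lra. }
      rewrite <- (G_F kx), <- (G_F ky), Ex, Ey; reflexivity.
  - assert (D1 : dT (F x) (F y) < d) by (apply (Hout 1%nat); apply not_and_or, Hn).
    assert (D3 := G_lip (F x) (F y)); rewrite !G_F in D3.
    apply (shadow_unique x _ _ d (4 * d)); auto.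
    + assert (T := dT_triangle x y ky); lra.
    + assert (0 <= dT x kx) by apply dT_nonneg; lra.
Qed.

End Direction.

Hypothesis K_cat : forall p, K p -> K (cat p).
Hypothesis K_cat_inv : forall p, K p -> K (cat_inv p).
Hypothesis d_expansive : d <= 1/8.

Lemma stays_near_in z : (forall n, nbhd K d (cat_iter n z)) -> K z.
Proof.
  intro Hnear; destruct (Hnear 0%Z) as [k [Kk Dk]].
  assert (Hf := shadow_forward cat K_cat dT_cat_le z k Kk Dk).
  assert (Hb := shadow_forward cat_inv K_cat_inv dT_cat_inv_le z k Kk Dk).
  replace z with k; [exact Kk|]; symmetry; apply cat_expansive.
  apply (cat_iter_ind (fun a b => dT a b < 1/8)); intro m.
  - enough (dT (Nat.iter m cat z) (Nat.iter m cat k) < d) by lra.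
    apply Hf; intro i; rewrite <- cat_iter_of_nat; apply Hnear.
  - enough (dT (Nat.iter m cat_inv z) (Nat.iter m cat_inv k) < d) by lra.
    apply Hb; intro i; rewrite <- cat_iter_opp_of_nat; apply Hnear.
Qed.

Lemma close_if_close_off_nbhd x y :
  ~ K x ->
  (forall n, ~ nbhd K d (cat_iter n x) \/ ~ nbhd K d (cat_iter n y) ->
             dT (cat_iter n x) (cat_iter n y) < d) ->
  dT x y < 2 * d.
Proof.
  intros Hx Hout.
  destruct (classic (nbhd K d x /\ nbhd K d y)) as [[Nx Ny]|Hn].
  2: { assert (dT x y < d) by (apply (Hout 0%Z), not_and_or, Hn).
       assert (0 <= dT x y) by apply dT_nonneg; lra. }
  destruct (not_all_ex_not _ _ (fun H => Hx (stays_near_in x H))) as [n Hn].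
  assert (Hk : exists k, K k /\ dT x k < d /\ dT y k < d).
  { destruct n as [|p|p]; [contradiction|..].
    - apply (shadow_common cat cat_inv K_cat cat_inv_cat dT_cat_le dT_cat_inv_le
               (Pos.to_nat p) x y Nx Ny (or_introl Hn)).
      intro i; rewrite <- !cat_iter_of_nat; apply Hout.
    - apply (shadow_common cat_inv cat K_cat_inv cat_cat_inv dT_cat_inv_le dT_cat_le
               (Pos.to_nat p) x y Nx Ny (or_introl Hn)).
      intro i; rewrite <- !cat_iter_opp_of_nat; apply Hout. }
  destruct Hk as [k [_ [Dx Dy]]].
  assert (T := dT_triangle x k y); rewrite (dT_sym k y) in T; lra.
Qed.

End Shadowing.

Lemma open_dT_ball c r : openT2 (fun y => dT y c < r).
Proof.
  intros p Hp; exists (r - dT (proj p) c); split; [lra|]; intros q H1 H2.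
  assert (T := dT_triangle (proj q) (proj p) c).
  assert (P : supnorm (vsub q p) < r - dT (proj p) c) by (apply Rmax_lub_lt; auto).
  assert (L := dT_proj_le q p); lra.
Qed.

Lemma open_nbhd K d : openT2 (nbhd K d).
Proof.
  intros p [k [Hk Hp]]; destruct (open_dT_ball k d p Hp) as [e [He H]].
  exists e; split; [exact He|]; intros q H1 H2; exists k; auto.
Qed.

Lemma compatible_rho_ball_in_dT_ball X rho a e :
  compatible_metric X rho -> X a -> 0 < e ->
  exists r, 0 < r /\ forall b, X b -> rho a b < r -> dT a b < e.
Proof.
  intros [_ Hopen] Xa He.
  destruct (proj1 (Hopen (fun b => X b /\ dT b a < e) (fun x H => proj1 H))) with a
    as [r [Hr Hb]].
  - exists (fun y => dT y a < e); split; [apply open_dT_ball | intros x Hx; tauto].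
  - rewrite dT_refl; auto.
  - exists r; split; [exact Hr|]; intros b Xb Hab; rewrite dT_sym; apply (Hb b Xb Hab).
Qed.

Lemma compatible_dT_ball_in_rho_ball X rho a r :
  compatible_metric X rho -> X a -> 0 < r ->
  exists s, 0 < s /\ forall b, X b -> dT a b < s -> rho a b < r.
Proof.
  intros [[_ [Hzero [_ Htri]]] Hopen] Xa Hr.
  destruct (proj2 (Hopen (fun b => X b /\ rho a b < r) (fun x H => proj1 H)))
    as [U [HU HXU]].
  { intros x [Xx Hx]; exists (r - rho a x); split; [lra|].
    intros y Xy Hy; split; auto; assert (T := Htri a x y Xa Xx Xy); lra. }
  assert (Ua : U (proj (pt a))).
  { rewrite proj_pt; apply HXU; auto; split; auto.
    rewrite (proj2 (Hzero a a Xa Xa) eq_refl); exact Hr. }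
  destruct (HU _ Ua) as [s [Hs Hq]]; exists s; split; [exact Hs|]; intros b Xb Hab.
  destruct (dT_lift b a) as [v [Hv Sv]]; rewrite dT_sym, <- Sv in Hab.
  set (q := (fst (pt a) + fst v, snd (pt a) + snd v)).
  assert (Eq : proj q = b).
  { rewrite <- (proj_pt b); apply proj_eq.
    replace (vsub q (pt b)) with (vsub (0, 0) (vsub (vsub (pt b) (pt a)) v))
      by (unfold q; vec_eq).
    apply integral_vsub; [exists 0%Z, 0%Z; auto | exact Hv]. }
  assert (Uq : U (proj q)).
  { destruct (supnorm_bounds v); apply Hq; apply Rabs_lt_iff; unfold q; cbn; lra. }
  rewrite Eq in Uq; apply HXU in Uq; tauto.
Qed.

Section UniformControl.

Variables (K : T2 -> Prop) (rho : T2 -> T2 -> R) (d eta : R).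
Hypothesis rho_compatible : compatible_metric (fun y => ~ K y) rho.
Hypothesis d_pos : 0 < d.
Hypothesis eta_pos : 0 < eta.

Lemma not_in_of_not_nbhd y : ~ nbhd K d y -> ~ K y.
Proof. intros Hy Ky; apply Hy; exists y; rewrite dT_refl; auto. Qed.

Lemma rho_controls_dT_locally t : exists de, 0 < de /\
  forall q b, Rabs (fst q - fst t) < de -> Rabs (snd q - snd t) < de ->
    ~ nbhd K d (proj q) -> ~ K b -> rho (proj q) b < de -> dT (proj q) b < eta.
Proof.
  assert (Dqt : forall q de, Rabs (fst q - fst t) < de -> Rabs (snd q - snd t) < de ->
            dT (proj t) (proj q) < de).
  { intros q de H1 H2; eapply Rle_lt_trans; [apply dT_proj_le|].
    apply Rmax_lub_lt; cbn; rewrite Rabs_minus_sym; auto. }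
  destruct (classic (K (proj t))) as [Kt|Xt].
  { exists d; split; [exact d_pos|]; intros q b H1 H2 Nq; exfalso; apply Nq.
    exists (proj t); split; [exact Kt|]; rewrite dT_sym; apply Dqt; auto. }
  destruct (compatible_rho_ball_in_dT_ball _ _ (proj t) (eta / 2) rho_compatible Xt)
    as [r [Hr Hrd]]; [lra|].
  destruct (compatible_dT_ball_in_rho_ball _ _ (proj t) (r / 2) rho_compatible Xt)
    as [s [Hs Hdr]]; [lra|].
  destruct rho_compatible as [[_ [_ [_ Htri]]] _].
  exists (Rmin s (Rmin (r / 2) (eta / 2))).
  assert (M1 := Rmin_l s (Rmin (r / 2) (eta / 2))).
  assert (M2 := Rmin_r s (Rmin (r / 2) (eta / 2))).
  assert (M3 := Rmin_l (r / 2) (eta / 2)); assert (M4 := Rmin_r (r / 2) (eta / 2)).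
  split; [repeat apply Rmin_glb_lt; lra|]; intros q b H1 H2 Nq Xb Hqb.
  assert (Xq := not_in_of_not_nbhd _ Nq).
  assert (D := Dqt q _ H1 H2).
  assert (R1 : rho (proj t) (proj q) < r / 2) by (apply Hdr; auto; lra).
  assert (R2 : rho (proj t) b < r) by (assert (T := Htri _ _ _ Xt Xq Xb); lra).
  assert (D1 : dT (proj t) b < eta / 2) by (apply Hrd; auto).
  assert (T := dT_triangle (proj q) (proj t) b); rewrite (dT_sym (proj q) (proj t)) in T; lra.
Qed.

(* Compactness of the closed unit square turns the local moduli into a uniform one. *)
Lemma rho_controls_dT : exists c, 0 < c /\
  forall a b, ~ nbhd K d a -> ~ K b -> rho a b < c -> dT a b < eta.
Proof.
  assert (Hdelta : forall u v : R, {de : posreal | forall q b,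
      Rabs (fst q - u) < de -> Rabs (snd q - v) < de ->
      ~ nbhd K d (proj q) -> ~ K b -> rho (proj q) b < de -> dT (proj q) b < eta}).
  { intros u v; apply constructive_indefinite_description.
    destruct (rho_controls_dT_locally (u, v)) as [de [Hde G]].
    exists (mkposreal de Hde); exact G. }
  destruct (Compactness.compactness_value_2d 0 1 0 1 (fun u v => proj1_sig (Hdelta u v)))
    as [c Hc].
  exists c; split; [apply cond_pos|]; intros a b Na Xb Hab.
  destruct (proj2_sig a) as [B1 B2].
  apply NNPP; intro Hn; apply (Hc (fst (pt a)) (snd (pt a))); [unfold pt; lra..|].
  intros [u [v [_ [_ [Hu [Hv Hcv]]]]]]; apply Hn.
  destruct (Hdelta u v) as [de G]; cbn in Hu, Hv, Hcv.
  rewrite <- (proj_pt a); apply G; rewrite ?proj_pt; auto; lra.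
Qed.

End UniformControl.

Lemma periodic_orbit_dyn_isolated x0 : periodic_point x0 -> dyn_isolated (orbit x0).
Proof.
  intro Hx0; destruct (periodic_orbit_separated x0 Hx0) as [sep [Hsep Ksep]].
  set (d := Rmin (sep / 6) (1 / 8)).
  assert (D1 := Rmin_l (sep / 6) (1 / 8)); assert (D2 := Rmin_r (sep / 6) (1 / 8)).
  fold d in D1, D2.
  assert (Hd : 0 < d) by (apply Rmin_glb_lt; lra).
  exists (nbhd (orbit x0) d); split; [apply open_nbhd|]; split.
  - intros y Hy; exists y; rewrite dT_refl; auto.
  - intro y; split.
    + intro Hy; apply (stays_near_in (orbit x0) sep d Ksep ltac:(lra)
                 (fun p => orbit_cat_iter x0 p 1) (fun p => orbit_cat_iter x0 p (-1)) D2).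
      intro n; destruct (Hy (- n)%Z) as [z [Hz ->]]; rewrite cat_iter_opp_r; exact Hz.
    + intros Hy n; exists (cat_iter (- n) y); split; [|symmetry; apply cat_iter_opp_r].
      exists (cat_iter (- n) y); rewrite dT_refl; split; [apply orbit_cat_iter|]; auto.
Qed.

Lemma periodic_orbit_complement_mi_expansive x0 :
  periodic_point x0 -> mi_expansive_on (fun y => ~ orbit x0 y).
Proof.
  intro Hx0; destruct (periodic_orbit_separated x0 Hx0) as [sep [Hsep Ksep]].
  set (d := Rmin (sep / 6) (1 / 32)).
  assert (D1 := Rmin_l (sep / 6) (1 / 32)); assert (D2 := Rmin_r (sep / 6) (1 / 32)).
  fold d in D1, D2.
  assert (Hd : 0 < d) by (apply Rmin_glb_lt; lra).
  intros rho Hrho; destruct (rho_controls_dT _ _ d d Hrho Hd Hd) as [c [Hc Hctrl]].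
  exists (c / 2); split; [lra|]; intros x y Xx Xy Hxy; apply NNPP; intro Hfar; apply Hxy.
  assert (Hrho_n : forall n, rho (cat_iter n x) (cat_iter n y) < c).
  { intro n; apply Rnot_le_lt; intro H; apply Hfar; exists n; lra. }
  apply cat_expansive; intro n.
  enough (dT (cat_iter n x) (cat_iter n y) < 2 * d) by lra.
  apply (close_if_close_off_nbhd (orbit x0) sep d Ksep ltac:(lra)
           (fun p => orbit_cat_iter x0 p 1) (fun p => orbit_cat_iter x0 p (-1)) ltac:(lra));
    [apply not_orbit_cat_iter; exact Xx|].
  intros m; rewrite <- !cat_iter_add; intros [Nx|Ny].
  - apply Hctrl; auto; apply not_orbit_cat_iter; exact Xy.
  - rewrite dT_sym; apply Hctrl; auto; [apply not_orbit_cat_iter; exact Xx|].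
    rewrite (proj1 (proj2 (proj2 (proj1 Hrho)))); auto; apply not_orbit_cat_iter; auto.
Qed.

Theorem mainTheorem15 (x0 : T2) :
  periodic_point x0 ->
  dyn_isolated (orbit x0) /\
  mi_expansive_on (fun y => ~ orbit x0 y).
Proof.
  intro Hx0; split.
  - exact (periodic_orbit_dyn_isolated x0 Hx0).
  - exact (periodic_orbit_complement_mi_expansive x0 Hx0).
Qed.
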